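(* Let $\lambda$ be a nonzero real number, $x$ a real number with $|\lambda x|<1$, and $p\ge2$ an integer. Then \[ \mathrm{Bel}_{p,\lambda}(x)=\frac{x\,e_{\lambda}^{-1}(x)}{1+\lambda x}\,e_{\lambda}(x,\ 1|1-p)-\frac{\lambda x}{1+\lambda x}\sum_{l=0}^{p-2}\binom{p-1}{l}\mathrm{Bel}_{l+1,\lambda}(x). \]
   Context: For nonzero real $\lambda$: $(1)_{0,\lambda}=1$, $(1)_{n,\lambda}=1(1-\lambda)\cdots(1-(n-1)\lambda)$ for $n\ge1$; $e_\lambda(x)=(1+\lambda x)^{1/\lambda}$ and $e_\lambda^{-1}(x)=(1+\lambda x)^{-1/\lambda}$. For an integer $q\ge1$, $e_{\lambda}(x,\ 1|-q)=\sum_{n=0}^{\infty}\frac{(1)_{n,\lambda}}{n!}(n+1)^{q}x^{n}$. The new type degenerate Bell polynomials $\mathrm{Bel}_{n,\lambda}(x)$ are defined by $e_{\lambda}(xe^{t})\,e_{\lambda}^{-1}(x)=\big(\frac{1+\lambda xe^t}{1+\lambda x}\big)^{1/\lambda}=\sum_{n=0}^{\infty}\mathrm{Bel}_{n,\lambda}(x)\frac{t^{n}}{n!}$. *)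

From Stdlib Require Import Reals.
From Coquelicot Require Import Coquelicot.
Open Scope R_scope.

Fixpoint dfall (lam : R) (n : nat) : R :=
  match n with
  | O => 1
  | S m => dfall lam m * (1 - INR m * lam)
  end.

Definition e_lam (lam x : R) : R := Rpower (1 + lam * x) (1 / lam).

Definition e_lam_inv (lam x : R) : R := Rpower (1 + lam * x) (- (1 / lam)).

(* e_lambda(x, 1 | -q) = sum_{n>=0} (1)_{n,lambda}/n! (n+1)^q x^n *)
Definition e_lam_poly (lam x : R) (q : nat) : R :=
  Series (fun n => dfall lam n / INR (Factorial.fact n) * (INR n + 1) ^ q * x ^ n).

(* Generating function of the new type degenerate Bell polynomials:
   t |-> e_lambda(x e^t) e_lambda^{-1}(x) = ((1 + lambda x e^t)/(1 + lambda x))^(1/lambda). *)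
Definition bell_gf (lam x : R) (t : R) : R :=
  Rpower ((1 + lam * x * exp t) / (1 + lam * x)) (1 / lam).

(* Bel_{n,lambda}(x) = n-th Taylor coefficient times n!, i.e. the n-th derivative at t = 0. *)
Definition Bel (n : nat) (lam x : R) : R := Derive_n (bell_gf lam x) n 0.

From Stdlib Require Import Reals Lra Lia.
From Coquelicot Require Import Coquelicot.
Open Scope R_scope.

(* The coefficients a_n = (1)_{n,lam}/n! give the power series of e_lam on
   |lam y| < 1, since both solve (1 + lam y) f' = f with f 0 = 1.  Hence the
   generating function is e_lam^{-1}(x) * sum a_n x^n e^{nt}, and differentiating
   termwise, Bel_k = e_lam^{-1}(x) * sum n^k a_n x^n.  Shifting the index and
   using (n + 1) a_{n+1} = (1 - n lam) a_n turns sum n^p a_n x^n into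
   x sum (n+1)^(p-1) a_n x^n - lam x sum n (n+1)^(p-1) a_n x^n; expanding
   (n+1)^(p-1) binomially writes the last sum through Bel_{l+1}, l <= p - 1, and
   solving for the term l = p - 1 gives the formula. *)

Definition e_lam_coef (lam : R) (n : nat) : R := dfall lam n / INR (Factorial.fact n).

Lemma e_lam_coef_S lam n :
  INR (S n) * e_lam_coef lam (S n) = (1 - INR n * lam) * e_lam_coef lam n.
Proof.
  unfold e_lam_coef; rewrite fact_simpl, mult_INR; simpl dfall.
  field; split; [apply INR_fact_neq_0 | apply not_0_INR; lia].
Qed.

Lemma Rabs_dfall_le lam n : Rabs (dfall lam n) <= dfall (- Rabs lam) n.
Proof.
  induction n as [|n IH]; simpl.
  - rewrite Rabs_R1; lra.
  - rewrite Rabs_mult.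
    assert (Hf : Rabs (1 - INR n * lam) <= 1 - INR n * - Rabs lam).
    { eapply Rle_trans; [apply Rabs_triang|].
      rewrite Rabs_R1, Rabs_Ropp, Rabs_mult, (Rabs_pos_eq (INR n)) by apply pos_INR.
      lra. }
    apply Rmult_le_compat; auto using Rabs_pos.
Qed.

Lemma dfall_opp_pos mu n : 0 <= mu -> 0 < dfall (- mu) n.
Proof.
  intros Hmu; induction n as [|n IH]; simpl; [lra|].
  apply Rmult_lt_0_compat; [exact IH|].
  pose proof (pos_INR n); nra.
Qed.

Lemma CV_radius_le_Rabs (a b : nat -> R) :
  (forall n, Rabs (a n) <= Rabs (b n)) -> Rbar_le (CV_radius b) (CV_radius a).
Proof.
  intros Hab; apply (CV_radius_bounded b); intros r [M HM].
  apply (CV_radius_bounded a); exists M; intros n.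
  eapply Rle_trans; [|apply (HM n)].
  rewrite !Rabs_mult; apply Rmult_le_compat_r; [apply Rabs_pos | apply Hab].
Qed.

Lemma CV_radius_e_lam_coef_opp mu : 0 < mu -> CV_radius (e_lam_coef (- mu)) = / mu.
Proof.
  intros Hmu; apply CV_radius_finite_DAlembert; [|exact Hmu|].
  - intros n; unfold e_lam_coef.
    pose proof (dfall_opp_pos mu n ltac:(lra)); pose proof (INR_fact_lt_0 n).
    apply Rgt_not_eq, Rdiv_lt_0_compat; assumption.
  - (* consecutive coefficients have ratio (1 + n mu) / (n + 1) *)
    apply is_lim_seq_ext with (fun n => mu + (1 - mu) * / INR (S n)).
    + intros n.
      assert (Hc : e_lam_coef (- mu) (S n) = (1 + INR n * mu) / INR (S n) * e_lam_coef (- mu) n).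
      { apply (Rmult_eq_reg_l (INR (S n))); [|apply not_0_INR; lia].
        rewrite e_lam_coef_S; field; apply not_0_INR; lia. }
      assert (Hpos : 0 < e_lam_coef (- mu) n).
      { apply Rdiv_lt_0_compat; [apply dfall_opp_pos; lra | apply INR_fact_lt_0]. }
      pose proof (pos_INR n); rewrite S_INR in Hc |- *.
      rewrite Hc; replace (_ / e_lam_coef (- mu) n) with ((1 + INR n * mu) / (INR n + 1))
        by (field; lra).
      rewrite Rabs_pos_eq; [field; lra|].
      apply Rdiv_le_0_compat; nra.
    + replace (Finite mu) with (Finite (mu + (1 - mu) * 0)) by (f_equal; ring).
      apply is_lim_seq_plus'; [apply is_lim_seq_const|].
      apply (is_lim_seq_scal_l _ _ 0).
      replace (Finite 0) with (Rbar_inv p_infty) by reflexivity.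
      apply is_lim_seq_inv; [|discriminate].
      apply (is_lim_seq_incr_1 INR), is_lim_seq_INR.
Qed.

Lemma CV_radius_e_lam_coef lam :
  lam <> 0 -> Rbar_le (/ Rabs lam) (CV_radius (e_lam_coef lam)).
Proof.
  intros Hl; rewrite <- CV_radius_e_lam_coef_opp by (apply Rabs_pos_lt; exact Hl).
  apply CV_radius_le_Rabs; intros n; unfold e_lam_coef.
  pose proof (INR_fact_lt_0 n).
  rewrite !Rabs_div, (Rabs_pos_eq (INR _)) by lra.
  apply Rmult_le_compat_r; [apply Rlt_le, Rinv_0_lt_compat; lra|].
  eapply Rle_trans; [apply Rabs_dfall_le | apply Rle_abs].
Qed.

Lemma Rabs_lt_CV_radius_e_lam_coef lam y :
  lam <> 0 -> Rabs (lam * y) < 1 -> Rbar_lt (Rabs y) (CV_radius (e_lam_coef lam)).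
Proof.
  intros Hl Hy; eapply Rbar_lt_le_trans; [|apply CV_radius_e_lam_coef, Hl]; simpl.
  pose proof (Rabs_pos_lt _ Hl).
  apply (Rmult_lt_reg_l (Rabs lam)); [lra|].
  rewrite Rinv_r, <- Rabs_mult; lra.
Qed.

Lemma PS_derive_e_lam_coef lam n :
  PS_derive (e_lam_coef lam) n
  = PS_plus (e_lam_coef lam) (PS_scal (- lam) (PS_incr_1 (PS_derive (e_lam_coef lam)))) n.
Proof.
  unfold PS_derive, PS_plus, PS_scal, PS_incr_1, plus, scal, mult, zero; cbn -[INR e_lam_coef].
  rewrite e_lam_coef_S; destruct n as [|n]; [simpl INR|]; ring.
Qed.

Lemma e_lam_coef_ode lam y : lam <> 0 -> Rabs (lam * y) < 1 ->
  (1 + lam * y) * PSeries (PS_derive (e_lam_coef lam)) y = PSeries (e_lam_coef lam) y.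
Proof.
  intros Hl Hy; pose proof (Rabs_lt_CV_radius_e_lam_coef _ _ Hl Hy) as Hr.
  transitivity (PSeries (PS_derive (e_lam_coef lam)) y
                + lam * (y * PSeries (PS_derive (e_lam_coef lam)) y)); [ring|].
  rewrite (PSeries_ext _ _ y (PS_derive_e_lam_coef lam)) at 1.
  rewrite PSeries_plus, PSeries_scal, PSeries_incr_1; [ring|now apply CV_radius_inside|].
  apply CV_radius_inside.
  rewrite CV_radius_scal, CV_radius_incr_1, CV_radius_derive by lra; exact Hr.
Qed.

Lemma e_lam_mul_inv lam y : e_lam lam y * e_lam_inv lam y = 1.
Proof.
  unfold e_lam, e_lam_inv; rewrite Rpower_Ropp.
  apply Rinv_r, Rgt_not_eq, exp_pos.
Qed.

Lemma is_derive_e_lam_inv lam z : lam <> 0 -> 0 < 1 + lam * z ->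
  is_derive (e_lam_inv lam) z (- e_lam_inv lam z / (1 + lam * z)).
Proof.
  intros Hl Hz; unfold e_lam_inv, Rpower.
  auto_derive; [lra | field; lra].
Qed.

Lemma PSeries_e_lam_coef lam y : lam <> 0 -> Rabs (lam * y) < 1 ->
  PSeries (e_lam_coef lam) y = e_lam lam y.
Proof.
  intros Hl Hy.
  set (g := fun z => PSeries (e_lam_coef lam) z * e_lam_inv lam z).
  assert (Hg' : forall z, Rabs (z - 0) <= Rabs y -> is_derive g z 0).
  { intros z Hz; rewrite Rminus_0_r in Hz.
    assert (Hlz : Rabs (lam * z) < 1).
    { rewrite Rabs_mult in *; pose proof (Rabs_pos lam); nra. }
    assert (Hpos : 0 < 1 + lam * z) by (apply Rabs_def2 in Hlz; lra).
    pose proof (e_lam_coef_ode _ _ Hl Hlz) as Hode.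
    replace 0 with (PSeries (PS_derive (e_lam_coef lam)) z * e_lam_inv lam z
                    + PSeries (e_lam_coef lam) z * (- e_lam_inv lam z / (1 + lam * z))).
    - apply (is_derive_mult (PSeries (e_lam_coef lam)) (e_lam_inv lam));
        [| apply is_derive_e_lam_inv; auto | intros; apply Rmult_comm].
      apply is_derive_PSeries, Rabs_lt_CV_radius_e_lam_coef; auto.
    - rewrite <- Hode; field; lra. }
  destruct (MVT_cor4 g (fun _ => 0) 0 (Rabs y) Hg' y) as [_ [Hc _]];
    [rewrite Rminus_0_r; lra|].
  assert (Hg0 : g 0 = 1).
  { unfold g, e_lam_inv, Rpower.
    rewrite PSeries_0, Rmult_0_r, Rplus_0_r, ln_1, Rmult_0_r, exp_0.
    unfold e_lam_coef; simpl; field. }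
  assert (Hgy : g y = 1) by lra.
  replace (PSeries _ y) with (g y * e_lam lam y); [rewrite Hgy; ring|].
  unfold g; rewrite Rmult_assoc, (Rmult_comm (e_lam_inv _ _)), e_lam_mul_inv; ring.
Qed.

Definition PS_moment (a : nat -> R) (k n : nat) : R := INR n ^ k * a n.

Lemma PS_moment_0 a n : PS_moment a 0 n = a n.
Proof. unfold PS_moment; simpl; ring. Qed.

Lemma PS_moment_S a k n : PS_moment a (S k) n = PS_incr_1 (PS_derive (PS_moment a k)) n.
Proof.
  unfold PS_moment, PS_incr_1, PS_derive; destruct n as [|n]; simpl; [unfold zero; simpl|]; ring.
Qed.

Lemma CV_radius_PS_moment a k : CV_radius (PS_moment a k) = CV_radius a.
Proof.
  induction k as [|k IH].
  - apply CV_radius_ext, PS_moment_0.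
  - rewrite (CV_radius_ext _ _ (PS_moment_S a k)), CV_radius_incr_1, CV_radius_derive.
    exact IH.
Qed.

Lemma locally_Rbar_lt_Rabs_mul_exp c (r : Rbar) t :
  Rbar_lt (Rabs (c * exp t)) r -> locally t (fun s => Rbar_lt (Rabs (c * exp s)) r).
Proof.
  intros Ht.
  assert (Hc : continuous (fun s => Rabs (c * exp s)) t).
  { apply continuous_Rabs_comp, (continuous_mult (fun _ => c));
      [apply continuous_const | apply continuous_exp]. }
  exact (Hc _ (open_Rbar_lt r _ Ht)).
Qed.

Section PSeriesAlongExp.

Variables (a : nat -> R) (x : R).

Lemma is_derive_PSeries_moment_exp k t : Rbar_lt (Rabs (x * exp t)) (CV_radius a) ->
  is_derive (fun s => PSeries (PS_moment a k) (x * exp s)) t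
            (PSeries (PS_moment a (S k)) (x * exp t)).
Proof.
  intros Ht; rewrite (PSeries_ext _ _ _ (PS_moment_S a k)), PSeries_incr_1.
  apply (is_derive_comp (PSeries (PS_moment a k)) (fun s => x * exp s)).
  - apply is_derive_PSeries; rewrite CV_radius_PS_moment; exact Ht.
  - auto_derive; [exact I | ring].
Qed.

Lemma Derive_n_PSeries_exp k t : Rbar_lt (Rabs (x * exp t)) (CV_radius a) ->
  Derive_n (fun s => PSeries a (x * exp s)) k t = PSeries (PS_moment a k) (x * exp t).
Proof.
  revert t; induction k as [|k IH]; intros t Ht.
  - symmetry; apply PSeries_ext, PS_moment_0.
  - simpl; rewrite (Derive_ext_loc _ (fun s => PSeries (PS_moment a k) (x * exp s))).
    + apply is_derive_unique, is_derive_PSeries_moment_exp, Ht.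
    + eapply filter_imp; [|apply locally_Rbar_lt_Rabs_mul_exp, Ht].
      intros s Hs; apply IH, Hs.
Qed.

End PSeriesAlongExp.

Lemma bell_gf_PSeries lam x s :
  lam <> 0 -> Rabs (lam * x) < 1 -> Rabs (lam * x * exp s) < 1 ->
  bell_gf lam x s = e_lam_inv lam x * PSeries (e_lam_coef lam) (x * exp s).
Proof.
  intros Hl Hx Hs; rewrite Rmult_assoc in Hs; rewrite PSeries_e_lam_coef by assumption.
  apply Rabs_def2 in Hx, Hs.
  unfold bell_gf, e_lam, e_lam_inv, Rpower.
  rewrite ln_div, <- exp_plus, <- Rmult_assoc by lra; f_equal; ring.
Qed.

Lemma Bel_PSeries lam x k : lam <> 0 -> Rabs (lam * x) < 1 ->
  Bel k lam x = e_lam_inv lam x * PSeries (PS_moment (e_lam_coef lam) k) x.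
Proof.
  intros Hl Hx; unfold Bel.
  assert (Hx0 : Rabs (lam * x * exp 0) < 1) by (rewrite exp_0, Rmult_1_r; exact Hx).
  rewrite (Derive_n_ext_loc _ (fun s => e_lam_inv lam x * PSeries (e_lam_coef lam) (x * exp s))).
  - rewrite Derive_n_scal_l, Derive_n_PSeries_exp; rewrite exp_0, Rmult_1_r; [reflexivity|].
    apply Rabs_lt_CV_radius_e_lam_coef; assumption.
  - eapply filter_imp; [|apply (locally_Rbar_lt_Rabs_mul_exp (lam * x) 1), Hx0].
    intros s Hs; apply bell_gf_PSeries; assumption.
Qed.

Lemma is_series_sum_f_R0 (u : nat -> nat -> R) (L : nat -> R) m :
  (forall l, is_series (u l) (L l)) ->
  is_series (fun n => sum_f_R0 (fun l => u l n) m) (sum_f_R0 L m).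
Proof.
  intros Hu; induction m as [|m IH]; simpl; [apply Hu|].
  apply (is_series_plus _ _ _ _ IH (Hu (S m))).
Qed.

Lemma is_series_PS_moment a x k : Rbar_lt (Rabs x) (CV_radius a) ->
  is_series (fun n => INR n ^ k * a n * x ^ n) (PSeries (PS_moment a k) x).
Proof.
  intros Hx; rewrite <- (CV_radius_PS_moment a k) in Hx.
  apply is_pseries_R, PSeries_correct, CV_radius_inside, Hx.
Qed.

Lemma is_series_binomial_moment a x j q : Rbar_lt (Rabs x) (CV_radius a) ->
  is_series (fun n => INR n ^ j * (INR n + 1) ^ q * a n * x ^ n)
            (sum_f_R0 (fun l => Binomial.C q l * PSeries (PS_moment a (l + j)) x) q).
Proof.
  intros Hx.
  apply (is_series_ext
           (fun n => sum_f_R0 (fun l => Binomial.C q l * (INR n ^ (l + j) * a n * x ^ n)) q)).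
  - intros n.
    change (sum_f_R0 (fun l => Binomial.C q l * (INR n ^ (l + j) * a n * x ^ n)) q
            = INR n ^ j * (INR n + 1) ^ q * a n * x ^ n).
    rewrite binomial.
    transitivity (INR n ^ j * a n * x ^ n
                  * sum_f_R0 (fun l => Binomial.C q l * INR n ^ l * 1 ^ (q - l)) q); [|ring].
    rewrite scal_sum; apply sum_eq; intros l _.
    rewrite pow1, pow_add; ring.
  - apply is_series_sum_f_R0; intros l.
    apply (is_series_scal (Binomial.C q l) (fun n => INR n ^ (l + j) * a n * x ^ n)).
    apply is_series_PS_moment, Hx.
Qed.

Lemma PSeries_moment_S_e_lam_coef lam x q : lam <> 0 -> Rabs (lam * x) < 1 ->
  PSeries (PS_moment (e_lam_coef lam) (S q)) x
  = x * e_lam_poly lam x q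
    - lam * x
      * sum_f_R0 (fun l => Binomial.C q l * PSeries (PS_moment (e_lam_coef lam) (l + 1)) x) q.
Proof.
  intros Hl Hx; pose proof (Rabs_lt_CV_radius_e_lam_coef _ _ Hl Hx) as Hr.
  set (a := e_lam_coef lam) in *.
  pose proof (is_series_binomial_moment a x 0 q Hr) as Hbin0.
  pose proof (is_series_binomial_moment a x 1 q Hr) as Hbin1.
  assert (Epoly : e_lam_poly lam x q
                  = sum_f_R0 (fun l => Binomial.C q l * PSeries (PS_moment a (l + 0)) x) q).
  { apply is_series_unique; eapply is_series_ext; [|exact Hbin0].
    intros n; unfold a, e_lam_coef; simpl; ring. }
  assert (Hshift : is_series (fun n => INR (S n) ^ S q * a (S n) * x ^ S n)
                             (PSeries (PS_moment a (S q)) x)).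
  { apply (is_series_incr_1 (fun n => INR n ^ S q * a n * x ^ n)).
    replace (plus _ _) with (PSeries (PS_moment a (S q)) x) by (unfold plus; simpl; ring).
    apply is_series_PS_moment, Hr. }
  rewrite <- (is_series_unique _ _ Hshift), Epoly; apply is_series_unique.
  eapply is_series_ext;
    [|exact (is_series_minus _ _ _ _ (is_series_scal x _ _ Hbin0)
                                     (is_series_scal (lam * x) _ _ Hbin1))].
  intros n; pose proof (e_lam_coef_S lam n) as Hrec; fold a in Hrec.
  change (x * (INR n ^ 0 * (INR n + 1) ^ q * a n * x ^ n)
          - lam * x * (INR n ^ 1 * (INR n + 1) ^ q * a n * x ^ n)
          = INR (S n) * INR (S n) ^ q * a (S n) * (x * x ^ n)).
  rewrite S_INR in *.
  transitivity ((INR n + 1) ^ q * ((INR n + 1) * a (S n)) * (x * x ^ n)); [|ring].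
  rewrite Hrec; ring.
Qed.

Lemma Bel_S lam x q : lam <> 0 -> Rabs (lam * x) < 1 ->
  Bel (S q) lam x
  = x * e_lam_inv lam x * e_lam_poly lam x q
    - lam * x * sum_f_R0 (fun l => Binomial.C q l * Bel (l + 1) lam x) q.
Proof.
  intros Hl Hx.
  rewrite (sum_eq _ (fun l => Binomial.C q l * PSeries (PS_moment (e_lam_coef lam) (l + 1)) x
                              * e_lam_inv lam x))
    by (intros l _; rewrite Bel_PSeries by assumption; ring).
  rewrite <- scal_sum, Bel_PSeries, PSeries_moment_S_e_lam_coef by assumption; ring.
Qed.

Theorem mainTheorem14 (lam x : R) (p : nat) :
  lam <> 0 -> Rabs (lam * x) < 1 -> (2 <= p)%nat ->
  Bel p lam x =
    x * e_lam_inv lam x / (1 + lam * x) * e_lam_poly lam x (p - 1)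
    - lam * x / (1 + lam * x)
      * sum_f_R0 (fun l => Binomial.C (p - 1) l * Bel (l + 1) lam x) (p - 2).
Proof.
  intros Hl Hx Hp.
  destruct p as [|[|r]]; [lia | lia |].
  replace (S (S r) - 1)%nat with (S r) by lia; replace (S (S r) - 2)%nat with r by lia.
  assert (Hpos : 0 < 1 + lam * x) by (apply Rabs_def2 in Hx; lra).
  pose proof (Bel_S lam x (S r) Hl Hx) as Hrec.
  rewrite tech5, C_n_n, Nat.add_1_r in Hrec.
  (* the last summand of [Hrec] is [Bel p] itself: solve the linear equation for it *)
  apply (Rmult_eq_reg_l (1 + lam * x)); [|lra].
  field_simplify; [|lra]; lra.
Qed.
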